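(* Let $D=pq$ with $p\neq q$ odd primes, let $r$ be a positive integer with $2rD$ square-free, and let $d$ be a (possibly negative) integer with $d\mid rD$. Let $C'_d$ be the curve $W^2=d-\frac{2rD}{d}Z^4$. Then: (1) $C'_d(\mathbb{Q}_2)\neq\emptyset$ if and only if $d-2rD/d\equiv1\pmod 8$ or $d\equiv1\pmod 8$; (2) for any prime $t\mid\frac{rD}{d}$, $C'_d(\mathbb{Q}_t)\neq\emptyset$ if and only if $\left(\frac{d}{t}\right)=1$; (3) for any prime $l\mid d$, $C'_d(\mathbb{Q}_l)\neq\emptyset$ if and only if $\left(\frac{-2rD/d}{l}\right)=1$.
   Context: $\left(\frac{\cdot}{\cdot}\right)$ denotes the Legendre symbol; $C'_d(\mathbb{Q}_v)$ denotes the set of $\mathbb{Q}_v$-points $(Z,W)$ of the affine curve. *)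

From HB Require Import structures.
From mathcomp Require Import all_boot all_order all_algebra.
Set Implicit Arguments. Unset Strict Implicit. Unset Printing Implicit Defensive.
Import Order.TTheory GRing.Theory Num.Theory.
Local Open Scope ring_scope.

Definition squarefree (n : nat) : Prop :=
  forall t : nat, prime t -> ~~ (t * t %| n)%N.

Definition legendre (a : int) (l : nat) : int :=
  if (l%:Z %| a)%Z then 0
  else if [exists x : 'I_l, ((x%:Z) ^+ 2 == a %[mod l%:Z])%Z] then 1 else -1.

(* The ring of l-adic integers Z_l is the inverse limit of Z/l^n Z; an
   element is represented by a coherent sequence of integer residues
   x n (taken mod l^n), i.e. x (n+1) = x n mod l^n. *)
Definition coherent (l : nat) (x : nat -> int) : Prop :=
  forall n : nat, (x n.+1 = x n %[mod (l ^ n)%:Z])%Z.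

(* Q_l = Z_l[1/l]: every element of Q_l is l^{-a} z with z in Z_l.
   A Q_l-point (Z, W) = (l^{-a} z, l^{-b} w) of the affine curve
   W^2 = d - e Z^4 is, after multiplying by the unit l^{4a+2b}, an identity
       l^{4a} w^2 = d l^{4a+2b} - e l^{2b} z^4     in Z_l,
   and an identity in the inverse limit holds iff it holds modulo every l^n. *)
Definition Ql_point (l : nat) (d e : int) : Prop :=
  exists (a b : nat) (z w : nat -> int),
    [/\ coherent l z, coherent l w &
      forall n : nat,
        ((l ^ (4 * a))%:Z * w n ^+ 2 =
           d * (l ^ (4 * a + 2 * b))%:Z - e * (l ^ (2 * b))%:Z * z n ^+ 4
           %[mod (l ^ n)%:Z])%Z].

Definition Cd_has_Ql_point (r D : nat) (d : int) (l : nat) : Prop :=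
  Ql_point l d ((2 * r * D)%:Z %/ d)%Z.

From HB Require Import structures.
From mathcomp Require Import all_boot all_order all_algebra ring zify.
From Stdlib Require Import ClassicalEpsilon.
Import Order.TTheory GRing.Theory Num.Theory.
Set Implicit Arguments.
Unset Strict Implicit.
Unset Printing Implicit Defensive.
Local Open Scope ring_scope.

(* A Q_t-point of W^2 = d - e Z^4 yields, modulo t^(2b+4a+3), a congruence
   X^2 = t^(2b) (t^(4a) d - e z^4).  When exactly one of d, e is divisible by t,
   and only once, the two terms of t^(4a) d - e z^4 have valuations of different
   parity, so the valuation of the right-hand side is that of the dominant term;
   it must be even, and the unit part must be a square mod t^3.  This forces
   d (resp. -e) to be a square mod t, and for t = 2 forces d or d - e to be 1
   mod 8.  Conversely, Hensel's lemma lifts such a square root to a coherent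
   sequence of square roots, i.e. a point with Z = 0, Z = 1 or Z = 1/t. *)

Lemma PoszX (t n : nat) : (t ^ n)%N%:Z = t%:Z ^+ n.
Proof. by rewrite -!natz natrX. Qed.

Lemma Euclid_dvdzM (t : nat) (a b : int) : prime t ->
  (t%:Z %| a * b)%Z = (t%:Z %| a)%Z || (t%:Z %| b)%Z.
Proof. by move=> pt; rewrite !dvdzE abszM Euclid_dvdM. Qed.

Lemma Euclid_dvdzX (t : nat) (a : int) n : prime t -> (0 < n)%N ->
  (t%:Z %| a ^+ n)%Z = (t%:Z %| a)%Z.
Proof. by move=> pt n0; rewrite !dvdzE abszX Euclid_dvdX // n0 andbT. Qed.

Lemma dvdz_exprn (t : int) m : (0 < m)%N -> (t %| t ^+ m)%Z.
Proof. by move=> m0; have := dvdz_exp2l t m0; rewrite expr1. Qed.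

Lemma dvdz_pfactor_coprime (t : nat) (z : int) : prime t -> z != 0 ->
  exists v z', z = t%:Z ^+ v * z' /\ ~~ (t%:Z %| z')%Z.
Proof.
move=> pt z0; have z_gt0 : (0 < `|z|)%N by rewrite absz_gt0.
have [m cm hm] := pfactor_coprime pt z_gt0.
exists (logn t `|z|), ((-1) ^+ (z < 0)%R * m%:Z); split.
  by rewrite mulrCA -PoszX -PoszM mulnC -hm mulz_sign_abs.
by rewrite dvdzE abszMsign /= -prime_coprime.
Qed.

Lemma odd_prime_dvdz (t : nat) (a : int) : prime t -> (t%:Z %| a)%Z ->
  ~~ (2 %| a)%Z -> odd t.
Proof. by move=> pt ta; case: (even_prime pt) => // t2; rewrite t2 in ta; rewrite ta. Qed.

Lemma odd_prime_ndvdz2 (t : nat) : prime t -> odd t -> ~~ (t%:Z %| 2)%Z.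
Proof. by move=> pt ot; rewrite dvdzE /= dvdn_prime2 //; apply: contraL ot => /eqP ->. Qed.

Lemma sqfree_dvdzM (t : nat) (a b : int) : ~~ (t%:Z * t%:Z %| a * b)%Z ->
  (t%:Z %| a)%Z -> ~~ (t%:Z %| b)%Z /\ exists2 a', a = t%:Z * a' & ~~ (t%:Z %| a')%Z.
Proof.
move=> sq /dvdzP [a' ea]; rewrite {}ea in sq *; split.
  by apply: contra sq; apply: dvdz_mul (dvdz_mull _ (dvdzz _)).
exists a'; first by rewrite mulrC.
by apply: contra sq => h; apply: dvdz_mulr; apply: dvdz_mul.
Qed.

Lemma sqr_congr_pfactor (t k N : nat) (x u : int) : prime t -> (k < N)%N ->
  (t%:Z ^+ N %| x ^+ 2 - t%:Z ^+ k * u)%Z -> ~~ (t%:Z %| u)%Z ->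
  ~~ odd k /\ exists y, (t%:Z ^+ (N - k) %| y ^+ 2 - u)%Z.
Proof.
move=> pt kN H nu; set T := t%:Z in H nu *.
have T0 : T != 0 by rewrite eqz_nat -lt0n prime_gt0.
have not_dvd_next : ~~ (T ^+ k.+1 %| T ^+ k * u)%Z.
  by rewrite exprSr dvdz_mul2l ?expf_neq0.
have [x_eq0|x_neq0] := eqVneq x 0.
  move: H; rewrite x_eq0 expr0n sub0r rpredN => /(dvdz_trans (dvdz_exp2l _ kN)) H.
  by rewrite H in not_dvd_next.
have [v [x' [xe nx']]] := dvdz_pfactor_coprime pt x_neq0.
rewrite xe exprMn -exprM muln2 in H.
have [lt|gt|vk] := ltngtP v.*2 k.
- have : (T ^+ (v.*2).+1 %| T ^+ v.*2 * x' ^+ 2)%Z.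
    rewrite -(subrK (T ^+ k * u) (_ * _)) rpredD //.
      by apply: dvdz_trans H; apply: dvdz_exp2l; apply: ltn_trans kN.
    by apply: dvdz_mulr; apply: dvdz_exp2l.
  by rewrite [T ^+ _.+1]exprSr dvdz_mul2l ?expf_neq0 // Euclid_dvdzX // (negbTE nx').
- have : (T ^+ k.+1 %| T ^+ k * u)%Z.
    have -> : T ^+ k * u = T ^+ v.*2 * x' ^+ 2 - (T ^+ v.*2 * x' ^+ 2 - T ^+ k * u).
      by rewrite opprB addrC subrK.
    rewrite rpredB //; first by apply: dvdz_mulr; apply: dvdz_exp2l.
    by apply: dvdz_trans H; apply: dvdz_exp2l.
  by rewrite (negbTE not_dvd_next).
- subst k; split; first by rewrite odd_double.
  exists x'; move: H.
  by rewrite -{1}(subnKC (ltnW kN)) exprD -mulrBr dvdz_mul2l ?expf_neq0.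
Qed.

(* The valuations 4a and 4c+1 of the two terms differ in parity, so the smaller one is
   the valuation of the difference, and it has to be even. *)
Lemma sqr_congr_two_terms (t b a c : nat) (A B X : int) : prime t ->
  ~~ (t%:Z %| A)%Z -> ((c < a)%N -> ~~ (t%:Z %| B)%Z) ->
  (t%:Z ^+ (2 * b + 4 * minn a c + 3) %|
     X ^+ 2 - t%:Z ^+ (2 * b) * (t%:Z ^+ (4 * a) * A - t%:Z ^+ (4 * c + 1) * B))%Z ->
  (a <= c)%N /\ exists x, (t%:Z ^+ 3 %| x ^+ 2 - (A - t%:Z ^+ (4 * (c - a) + 1) * B))%Z.
Proof.
move=> pt nA nB H; set T := t%:Z in nA nB H *.
case: (leqP a c) => [le | lt].
- have [j ec] : exists j, c = (a + j)%N by exists (c - a)%N; rewrite subnKC.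
  rewrite (minn_idPl le) in H; split => //; rewrite ec addKn.
  set u := A - T ^+ (4 * j + 1) * B.
  have nu : ~~ (T %| u)%Z.
    apply: contra nA => hu; have -> : A = u + T ^+ (4 * j + 1) * B by rewrite subrK.
    by rewrite rpredD // dvdz_mulr // dvdz_exprn // addn1.
  have factor_u : T ^+ (2 * b) * (T ^+ (4 * a) * A - T ^+ (4 * c + 1) * B) =
      T ^+ (2 * b + 4 * a) * u.
    by rewrite /u ec (_ : (4 * (a + j) + 1 = 4 * a + 4 * j + 1)%N) ?mulnDr // !exprD; ring.
  rewrite factor_u in H.
  have kN : (2 * b + 4 * a < 2 * b + 4 * a + 3)%N by rewrite addnS ltnS leq_addr.
  have [_ [x hx]] := sqr_congr_pfactor pt kN H nu.
  by exists x; rewrite addKn in hx.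
- exfalso; have [j ea] : exists j, a = (c + j + 1)%N.
    by exists (a - c.+1)%N; rewrite addn1 -addSn subnKC.
  set u := T ^+ (4 * j + 3) * A - B.
  have nu : ~~ (T %| u)%Z.
    apply: contra (nB lt) => hu; have -> : B = T ^+ (4 * j + 3) * A - u by rewrite subKr.
    by rewrite rpredB // dvdz_mulr // dvdz_exprn // addn3.
  have factor_u : T ^+ (2 * b) * (T ^+ (4 * a) * A - T ^+ (4 * c + 1) * B) =
      T ^+ (2 * b + 4 * c + 1) * u.
    by rewrite /u ea (_ : (4 * (c + j + 1) = 4 * c + 4 * j + 4)%N) ?mulnDr // !exprD; ring.
  rewrite (minn_idPr (ltnW lt)) factor_u in H.
  have kN : (2 * b + 4 * c + 1 < 2 * b + 4 * c + 3)%N by rewrite ltn_add2l.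
  have [] := sqr_congr_pfactor pt kN H nu.
  by rewrite addn1 /= oddD !oddM.
Qed.

Lemma Ql_point_truncate (l : nat) (d e : int) : Ql_point l d e ->
  exists a b (X z : int), (l%:Z ^+ (2 * b + 4 * a + 3) %|
    X ^+ 2 - l%:Z ^+ (2 * b) * (l%:Z ^+ (4 * a) * d - e * z ^+ 4))%Z.
Proof.
move=> [a [b [z [w [_ _ h]]]]]; set N := (2 * b + 4 * a + 3)%N.
exists a, b, (l%:Z ^+ (2 * a) * w N), (z N).
have -> : (l%:Z ^+ (2 * a) * w N) ^+ 2 - l%:Z ^+ (2 * b) * (l%:Z ^+ (4 * a) * d - e * z N ^+ 4)
    = l%:Z ^+ (4 * a) * w N ^+ 2 - (d * l%:Z ^+ (4 * a + 2 * b) - e * l%:Z ^+ (2 * b) * z N ^+ 4).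
  by rewrite exprMn -exprM mulnAC exprD; ring.
by move/eqP: (h N); rewrite eqz_mod_dvd !PoszX.
Qed.

Lemma Ql_point_dvd_e_sqr (t : nat) (d e' : int) : prime t ->
  ~~ (t%:Z %| d)%Z -> ~~ (t%:Z %| e')%Z -> Ql_point t d (t%:Z * e') ->
  (exists x, (t%:Z ^+ 3 %| x ^+ 2 - d)%Z) \/
  exists j z' x, ~~ (t%:Z %| z')%Z /\
    (t%:Z ^+ 3 %| x ^+ 2 - (d - t%:Z ^+ (4 * j + 1) * (e' * z' ^+ 4)))%Z.
Proof.
move=> pt nd ne /Ql_point_truncate [a [b [X [z H]]]].
have [z0|z0] := eqVneq z 0.
  have nB : (a < a)%N -> ~~ (t%:Z %| 0)%Z by rewrite ltnn.
  have H0 : (t%:Z ^+ (2 * b + 4 * minn a a + 3) %| X ^+ 2 -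
      t%:Z ^+ (2 * b) * (t%:Z ^+ (4 * a) * d - t%:Z ^+ (4 * a + 1) * 0))%Z.
    by move: H; rewrite z0 minnn expr0n !mulr0.
  have [_ [x hx]] := sqr_congr_two_terms pt nd nB H0.
  by left; exists x; rewrite mulr0 subr0 in hx.
have [c [z' [ze nz']]] := dvdz_pfactor_coprime pt z0.
have nB : ~~ (t%:Z %| e' * z' ^+ 4)%Z by rewrite Euclid_dvdzM // Euclid_dvdzX // negb_or ne.
have Hc : (t%:Z ^+ (2 * b + 4 * minn a c + 3) %| X ^+ 2 -
    t%:Z ^+ (2 * b) * (t%:Z ^+ (4 * a) * d - t%:Z ^+ (4 * c + 1) * (e' * z' ^+ 4)))%Z.
  have -> : t%:Z ^+ (4 * c + 1) * (e' * z' ^+ 4) = t%:Z * e' * z ^+ 4.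
    by rewrite ze exprMn -exprM (mulnC c) exprD expr1; ring.
  by apply: dvdz_trans H; rewrite dvdz_exp2l // leq_add2r leq_add2l leq_mul2l geq_minl orbT.
have [_ [x hx]] := sqr_congr_two_terms pt nd (fun _ => nB) Hc.
by right; exists (c - a)%N, z', x.
Qed.

Lemma Ql_point_dvd_d_sqr (l : nat) (d' e : int) : prime l ->
  ~~ (l%:Z %| d')%Z -> ~~ (l%:Z %| e)%Z -> Ql_point l (l%:Z * d') e ->
  exists x s, ~~ (l%:Z %| s)%Z /\ (l%:Z %| x ^+ 2 + e * s ^+ 2)%Z.
Proof.
move=> pl nd ne /Ql_point_truncate [a [b [X [z H]]]].
have [z0|z0] := eqVneq z 0.
  have kN : (2 * b + 4 * a + 1 < 2 * b + 4 * a + 3)%N by rewrite ltn_add2l.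
  have H0 : (l%:Z ^+ (2 * b + 4 * a + 3) %| X ^+ 2 - l%:Z ^+ (2 * b + 4 * a + 1) * d')%Z.
    suff <- : l%:Z ^+ (2 * b) * (l%:Z ^+ (4 * a) * (l%:Z * d') - e * z ^+ 4) =
      l%:Z ^+ (2 * b + 4 * a + 1) * d' by [].
    by rewrite z0 !exprD expr1; ring.
  have [] := sqr_congr_pfactor pl kN H0 nd.
  by rewrite addn1 /= oddD !oddM.
have [c [z' [ze nz']]] := dvdz_pfactor_coprime pl z0.
have nA : ~~ (l%:Z %| - e * z' ^+ 4)%Z.
  by rewrite mulNr rpredN Euclid_dvdzM // Euclid_dvdzX // negb_or ne.
have Hc : (l%:Z ^+ (2 * b + 4 * minn c a + 3) %| X ^+ 2 -
    l%:Z ^+ (2 * b) * (l%:Z ^+ (4 * c) * (- e * z' ^+ 4) - l%:Z ^+ (4 * a + 1) * (- d')))%Z.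
  have -> : l%:Z ^+ (4 * c) * (- e * z' ^+ 4) - l%:Z ^+ (4 * a + 1) * (- d') =
      l%:Z ^+ (4 * a) * (l%:Z * d') - e * z ^+ 4.
    by rewrite ze exprMn -exprM (mulnC c) exprD expr1; ring.
  by apply: dvdz_trans H; rewrite dvdz_exp2l // leq_add2r leq_add2l leq_mul2l geq_minr orbT.
have nB : ~~ (l%:Z %| - d')%Z by rewrite rpredN.
have [_ [x hx]] := sqr_congr_two_terms pl nA (fun _ => nB) Hc.
exists x, (z' ^+ 2); split; first by rewrite Euclid_dvdzX.
have -> : x ^+ 2 + e * (z' ^+ 2) ^+ 2 =
    x ^+ 2 - (- e * z' ^+ 4 - l%:Z ^+ (4 * (a - c) + 1) * - d') +
    l%:Z ^+ (4 * (a - c) + 1) * d' by ring.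
rewrite rpredD //; first exact: dvdz_trans (dvdz_exprn _ _) hx.
by rewrite dvdz_mulr // dvdz_exprn // addn1.
Qed.

Lemma oddzE (x : int) : ~~ (2 %| x)%Z -> exists q, x = 2 * q + 1.
Proof.
move=> nx; exists (x %/ 2)%Z; rewrite {1}(divz_eq x 2) mulrC; congr (_ + _).
have := @modz_ge0 x 2 isT; have := @ltz_pmod x 2 isT.
have : (x %% 2)%Z != 0 by apply: contra nx => /eqP/dvdz_mod0P.
by move: (x %% 2)%Z => r; lia.
Qed.

Lemma odd_sqrz_mod8 (x : int) : ~~ (2 %| x)%Z -> (8 %| x ^+ 2 - 1)%Z.
Proof.
move=> /oddzE [q ->]; have [/dvdzP [s ->] | /oddzE [s ->]] := boolP (2 %| q)%Z.
  by apply/dvdzP; exists (s * (2 * s + 1)); ring.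
by apply/dvdzP; exists ((2 * s + 1) * (s + 1)); ring.
Qed.

Lemma sqr_mod8_odd (x u : int) : ~~ (2 %| u)%Z -> (2 ^+ 3 %| x ^+ 2 - u)%Z ->
  (8 %| u - 1)%Z.
Proof.
move=> nu h.
have nx : ~~ (2 %| x)%Z.
  apply: contra nu => hx; have -> : u = x ^+ 2 - (x ^+ 2 - u) by ring.
  by rewrite rpredB ?dvdz_exp //; apply: dvdz_trans h; apply: (dvdz_exprn 2 (isT : 0 < 3)%N).
have -> : u - 1 = (x ^+ 2 - 1) - (x ^+ 2 - u) by ring.
by rewrite rpredB // odd_sqrz_mod8.
Qed.

Lemma modp_sqr_cancel_sqr (l : nat) (x s e : int) : prime l -> ~~ (l%:Z %| s)%Z ->
  (l%:Z %| x ^+ 2 + e * s ^+ 2)%Z -> exists y, (l%:Z %| y ^+ 2 + e)%Z.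
Proof.
move=> pl ns h.
have /eqP cop : coprimez s l%:Z.
  by rewrite coprimez_sym coprimezE prime_coprime // -dvdzE.
have [u [v huv]] := Bezoutz s l%:Z; rewrite cop in huv.
exists (x * u).
(* u is an inverse of s mod l, so (x u)^2 + e = u^2 (x^2 + e s^2) mod l. *)
have -> : (x * u) ^+ 2 + e = u ^+ 2 * (x ^+ 2 + e * s ^+ 2) + e * v * l%:Z * (1 + u * s).
  apply/eqP; rewrite -subr_eq0; apply/eqP.
  transitivity (e * (1 + u * s) * (1 - (u * s + v * l%:Z))); first by ring.
  by rewrite huv subrr mulr0.
by rewrite rpredD //; [exact: dvdz_mull | apply/dvdz_mulr/dvdz_mull].
Qed.

Lemma legendre_eq1 (c : int) (l : nat) : prime l ->
  legendre c l = 1 <-> ~~ (l%:Z %| c)%Z /\ exists x, (l%:Z %| x ^+ 2 - c)%Z.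
Proof.
move=> pl; rewrite /legendre; case: ifP => [_ | /negbT nc]; first by split => // -[].
case: ifP => [/existsP [x hx] | /negbT /existsPn nsq].
  by split => // _; split => //; exists (nat_of_ord x)%:Z; rewrite -eqz_mod_dvd.
split => // -[_ [x hx]]; exfalso.
have l0 : l%:Z != 0 by rewrite eqz_nat -lt0n prime_gt0.
have r0 : 0 <= (x %% l%:Z)%Z by apply: modz_ge0.
have rl : (`|(x %% l%:Z)%Z| < l)%N.
  by rewrite -ltz_nat gez0_abs // ltz_pmod // ltz_nat prime_gt0.
move: (nsq (Ordinal rl)); rewrite /= gez0_abs // eqz_mod_dvd.
have -> : (x %% l%:Z)%Z ^+ 2 - c = ((x %% l%:Z)%Z ^+ 2 - x ^+ 2) + (x ^+ 2 - c) by ring.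
by rewrite rpredD // -eqz_mod_dvd modzXm.
Qed.

Definition sqrt_seq (l : nat) (c : int) (w : nat -> int) : Prop :=
  forall n, (l%:Z ^+ n %| w n ^+ 2 - c)%Z /\ (l%:Z ^+ n %| w n.+1 - w n)%Z.

Lemma dependent_choice_seq (T : Type) (P : nat -> T -> Prop) (R : nat -> T -> T -> Prop)
    (x0 : T) : P 0%N x0 -> (forall n x, P n x -> exists y, P n.+1 y /\ R n x y) ->
  exists f : nat -> T, forall n, P n (f n) /\ R n (f n) (f n.+1).
Proof.
move=> P0 step.
pose next n x := epsilon (inhabits x0) (fun y => P n.+1 y /\ R n x y).
pose f := fix f n := if n is n'.+1 then next n' (f n') else x0.
have fP n : P n (f n).
  by elim: n => [//|n IH]; exact: (epsilon_spec _ _ (step n _ IH)).1.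
by exists f => n; split => //; exact: (epsilon_spec _ _ (step n _ (fP n))).2.
Qed.

Lemma sqrt_seq_odd (l : nat) (c x0 : int) : prime l -> odd l -> ~~ (l%:Z %| c)%Z ->
  (l%:Z %| x0 ^+ 2 - c)%Z -> exists w, sqrt_seq l c w.
Proof.
move=> pl ol nc h0; set L := l%:Z in nc h0 *.
have newton n x : (L ^+ n.+1 %| x ^+ 2 - c)%Z ->
    exists y, (L ^+ n.+2 %| y ^+ 2 - c)%Z /\ (L ^+ n.+1 %| y - x)%Z.
  move=> hx.
  have nx : ~~ (L %| x)%Z.
    apply: contra nc => lx; have -> : c = x ^+ 2 - (x ^+ 2 - c) by ring.
    by rewrite rpredB ?dvdz_exp //; apply: dvdz_trans hx; apply: dvdz_exprn.
  have /eqP cop : coprimez (2 * x) L.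
    by rewrite coprimez_sym coprimezE prime_coprime // -dvdzE Euclid_dvdzM // negb_or nx
      odd_prime_ndvdz2.
  have [u [v huv]] := Bezoutz (2 * x) L; rewrite cop in huv.
  have [j hj] := dvdzP hx.
  (* u inverts 2x mod L, so one Newton step x - (x^2 - c)/(2x) gains a factor L. *)
  exists (x - j * u * L ^+ n.+1); split.
    apply/dvdzP; exists (j * v + (j * u) ^+ 2 * L ^+ n).
    have -> : c = x ^+ 2 - j * L ^+ n.+1 by rewrite -hj; ring.
    apply/eqP; rewrite -subr_eq0; apply/eqP.
    transitivity (j * L ^+ n.+1 * (1 - (u * (2 * x) + v * L))); first by rewrite !exprS; ring.
    by rewrite huv subrr mulr0.
  by rewrite addrAC subrr add0r rpredN dvdz_mull.
have P0 : (L ^+ 1 %| x0 ^+ 2 - c)%Z by rewrite expr1.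
have [f hf] := dependent_choice_seq
  (P := fun n x => (L ^+ n.+1 %| x ^+ 2 - c)%Z) (R := fun n x y => (L ^+ n.+1 %| y - x)%Z)
  P0 newton.
exists f => n; have [h1 h2] := hf n.
by split; [apply: dvdz_trans h1 | apply: dvdz_trans h2]; apply: dvdz_exp2l.
Qed.

Lemma sqrt_seq_2 (c : int) : (8 %| c - 1)%Z -> exists w, sqrt_seq 2 c w.
Proof.
move=> h0.
have newton n x : (2 ^+ n.+3 %| x ^+ 2 - c)%Z /\ ~~ (2 %| x)%Z -> exists y,
    ((2 ^+ n.+4 %| y ^+ 2 - c)%Z /\ ~~ (2 %| y)%Z) /\ (2 ^+ n.+2 %| y - x)%Z.
  move=> [hx nx]; have [j hj] := dvdzP hx; have [q hq] := oddzE nx.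
  (* For odd x, (x - j 2^(n+2))^2 = x^2 - j 2^(n+3) mod 2^(n+4). *)
  exists (x - j * 2 ^+ n.+2); split; first split.
  - apply/dvdzP; exists (- j * q + j ^+ 2 * 2 ^+ n).
    have -> : c = x ^+ 2 - j * 2 ^+ n.+3 by rewrite -hj; ring.
    by rewrite hq !exprS; ring.
  - apply: contra nx => hy; have -> : x = (x - j * 2 ^+ n.+2) + j * 2 ^+ n.+2 by ring.
    by rewrite rpredD // dvdz_mull // (dvdz_exprn 2).
  - by rewrite addrAC subrr add0r rpredN dvdz_mull.
have P0 : (2 ^+ 3 %| 1 ^+ 2 - c)%Z /\ ~~ (2 %| 1)%Z.
  by rewrite expr1n -opprB rpredN.
have [f hf] := dependent_choice_seq
  (P := fun n x => (2 ^+ n.+3 %| x ^+ 2 - c)%Z /\ ~~ (2 %| x)%Z)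
  (R := fun n x y => (2 ^+ n.+2 %| y - x)%Z) P0 newton.
exists f => n; have [[h1 _] h2] := hf n.
split; [apply: dvdz_trans h1 | apply: dvdz_trans h2]; apply: dvdz_exp2l.
  by rewrite -addn3 leq_addr.
by rewrite -addn2 leq_addr.
Qed.

Lemma Ql_point_of_sqrt_seq (l a b : nat) (d e z c : int) (w : nat -> int) :
  sqrt_seq l c w ->
  l%:Z ^+ (4 * a) * c = d * l%:Z ^+ (4 * a + 2 * b) - e * l%:Z ^+ (2 * b) * z ^+ 4 ->
  Ql_point l d e.
Proof.
move=> hw hc; exists a, b, (fun _ => z), w; split => // n; apply/eqP.
  by rewrite eqz_mod_dvd PoszX (hw n).2.
by rewrite eqz_mod_dvd !PoszX -hc -mulrBr dvdz_mull // (hw n).1.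
Qed.

Lemma Ql_point_dvd_eP (t : nat) (d e' : int) : prime t -> odd t ->
  ~~ (t%:Z %| d)%Z -> ~~ (t%:Z %| e')%Z ->
  Ql_point t d (t%:Z * e') <-> legendre d t = 1.
Proof.
move=> pt ot nd ne; rewrite legendre_eq1 //; split.
- move=> /(Ql_point_dvd_e_sqr pt nd ne) sq; split => //.
  have T3 : (t%:Z %| t%:Z ^+ 3)%Z by exact: dvdz_exprn.
  case: sq => [[x hx] | [j [z' [x [_ hx]]]]]; exists x; first exact: dvdz_trans hx.
  have -> : x ^+ 2 - d = x ^+ 2 - (d - t%:Z ^+ (4 * j + 1) * (e' * z' ^+ 4)) -
      t%:Z ^+ (4 * j + 1) * (e' * z' ^+ 4) by ring.
  rewrite rpredB //; first exact: dvdz_trans T3 hx.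
  by rewrite dvdz_mulr // dvdz_exprn // addn1.
- move=> [_ [x0 hx0]]; have [w hw] := sqrt_seq_odd pt ot nd hx0.
  by apply: (Ql_point_of_sqrt_seq (a := 0) (b := 0) (z := 0) hw); ring.
Qed.

Lemma Ql_point_dvd_dP (l : nat) (d' e : int) : prime l -> odd l ->
  ~~ (l%:Z %| d')%Z -> ~~ (l%:Z %| e)%Z ->
  Ql_point l (l%:Z * d') e <-> legendre (- e) l = 1.
Proof.
move=> pl ol nd ne; rewrite legendre_eq1 // rpredN; split.
- move=> /(Ql_point_dvd_d_sqr pl nd ne) [x [s [ns hs]]]; split => //.
  by have [y hy] := modp_sqr_cancel_sqr pl ns hs; exists y; rewrite opprK.
- move=> [_ [x0 hx0]]; rewrite opprK in hx0.
  (* The point with Z = 1/l, W = w/l^2: W^2 = d - e Z^4 becomes w^2 = d l^4 - e. *)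
  set c := l%:Z * d' * l%:Z ^+ 4 - e.
  have l4 : (l%:Z %| l%:Z * d' * l%:Z ^+ 4)%Z by rewrite dvdz_mulr // dvdz_mulr.
  have nc : ~~ (l%:Z %| c)%Z.
    apply: contra ne => hc.
    have -> : e = l%:Z * d' * l%:Z ^+ 4 - c by rewrite /c; ring.
    by rewrite rpredB.
  have hx : (l%:Z %| x0 ^+ 2 - c)%Z.
    have -> : x0 ^+ 2 - c = x0 ^+ 2 + e - l%:Z * d' * l%:Z ^+ 4 by rewrite /c; ring.
    by rewrite rpredB.
  have [w hw] := sqrt_seq_odd pl ol nc hx.
  by apply: (Ql_point_of_sqrt_seq (a := 1) (b := 2) (z := 1) hw); rewrite /c; ring.
Qed.

Lemma Ql_point_2P (d f : int) : ~~ (2 %| d)%Z -> ~~ (2 %| f)%Z ->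
  Ql_point 2 d (2 * f) <-> (d - 2 * f = 1 %[mod 8])%Z \/ (d = 1 %[mod 8])%Z.
Proof.
move=> nd nf; split.
- move=> /(Ql_point_dvd_e_sqr (t := 2) isT nd nf) [[x hx] | [j [z' [x [nz hx]]]]].
    by right; apply/eqP; rewrite eqz_mod_dvd; exact: sqr_mod8_odd hx.
  set u := d - 2 ^+ (4 * j + 1) * (f * z' ^+ 4) in hx.
  have nu : ~~ (2 %| u)%Z.
    apply: contra nd => hu; have -> : d = u + 2 ^+ (4 * j + 1) * (f * z' ^+ 4) by rewrite subrK.
    by rewrite rpredD // dvdz_mulr // (dvdz_exprn 2) // addn1.
  have u1 := sqr_mod8_odd nu hx.
  case: j => [|j] in u u1 {hx nu} *; [left | right]; apply/eqP; rewrite eqz_mod_dvd.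
    (* 2 f z'^4 = 2 f mod 8 because z'^2 = 1 mod 8. *)
    have -> : d - 2 * f - 1 = (u - 1) + 2 * f * (z' ^+ 2 + 1) * (z' ^+ 2 - 1) by rewrite /u; ring.
    by rewrite rpredD // dvdz_mull // odd_sqrz_mod8.
  have -> : d - 1 = (u - 1) + 2 ^+ 3 * (2 ^+ (4 * j + 2) * f * z' ^+ 4).
    by rewrite /u (_ : (4 * j.+1 + 1 = 3 + (4 * j + 2))%N) ?exprD; ring.
  by rewrite rpredD // dvdz_mulr.
- case=> /eqP; rewrite eqz_mod_dvd => /sqrt_seq_2 [w hw].
    by apply: (Ql_point_of_sqrt_seq (a := 0) (b := 0) (z := 1) hw); ring.
  by apply: (Ql_point_of_sqrt_seq (a := 0) (b := 0) (z := 0) hw); ring.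
Qed.

Theorem lemma2p2 (p q r : nat) (d : int) :
  prime p -> prime q -> p != q -> odd p -> odd q ->
  (0 < r)%N -> squarefree (2 * r * (p * q)) ->
  (d %| (r * (p * q))%:Z)%Z ->
  let D := (p * q)%N in
  let e := ((2 * r * D)%:Z %/ d)%Z in
  [/\ (Cd_has_Ql_point r D d 2 <->
         ((d - e = 1 %[mod 8])%Z \/ (d = 1 %[mod 8])%Z)),
      (forall t : nat, prime t -> (t%:Z %| ((r * D)%:Z %/ d))%Z ->
         (Cd_has_Ql_point r D d t <-> legendre d t = 1)) &
      (forall l : nat, prime l -> (l%:Z %| d)%Z ->
         (Cd_has_Ql_point r D d l <-> legendre (- e) l = 1))].
Proof.
move=> _ _ _ _ _ _ sqf hd D e; rewrite /Cd_has_Ql_point -/e.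
set n := (r * (p * q))%N in hd; set f := (n%:Z %/ d)%Z.
have hf : f * d = n%:Z := divzK hd.
have he : e = 2 * f by rewrite /e /D -mulnA PoszM /f mulz_divA.
have sq t : prime t -> ~~ (t%:Z * t%:Z %| f * d)%Z.
  move=> pt; rewrite hf dvdzE /=.
  by apply: contra (sqf t pt); rewrite -mulnA; apply: dvdn_mull.
have n_odd : ~~ (2 %| n%:Z)%Z.
  by rewrite dvdzE /=; apply: contra (sqf 2 isT); rewrite -mulnA; apply: dvdn_mul.
have d_odd : ~~ (2 %| d)%Z by apply: contra n_odd => h; rewrite -hf dvdz_mull.
have f_odd : ~~ (2 %| f)%Z by apply: contra n_odd => h; rewrite -hf dvdz_mulr.
rewrite he; split.
- exact: Ql_point_2P.
- move=> t pt tf; have [nd [g -> ng]] := sqfree_dvdzM (sq t pt) tf.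
  have ot := odd_prime_dvdz pt tf f_odd.
  rewrite mulrCA; apply: Ql_point_dvd_eP => //.
  by rewrite Euclid_dvdzM // negb_or odd_prime_ndvdz2.
- move=> l pl ld; rewrite mulrC in sq.
  have [nf [d' -> nd']] := sqfree_dvdzM (sq l pl) ld.
  have ol := odd_prime_dvdz pl ld d_odd.
  apply: Ql_point_dvd_dP => //.
  by rewrite Euclid_dvdzM // negb_or odd_prime_ndvdz2.
Qed.
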